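(* Let $k$ be a field with $1/2\in k$, let $A=k[[x_1,\dots,x_d]]$ and $B=A[[x_0]]$, with maximal ideal $\mathfrak m_B$. Let $F=x_0^2+x_1^2+\cdots+x_d^2+G$ with $G\in\mathfrak m_B^3$. Then there exist a unit $v_0\in B$, an element $a_0\in(x_1,\dots,x_d)B$ and an element $G_1\in(x_1,\dots,x_d)^3B$ such that $$F=v_0(x_0+a_0)^2+x_1^2+\cdots+x_d^2+G_1.$$ *)

(* Formal power series k[[x_0,...,x_{n-1}]] over a field,
   given by their coefficient functions on multi-indices. *)
From mathcomp Require Import all_boot all_order all_algebra.
Set Implicit Arguments. Unset Strict Implicit. Unset Printing Implicit Defensive.
Import GRing.Theory.
Local Open Scope ring_scope.

Definition mi (n : nat) := {ffun 'I_n -> nat}.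

Definition ps (R : nzRingType) (n : nat) := mi n -> R.

Section PS.
Variables (R : nzRingType) (n : nat).

Definition mi0 : mi n := [ffun _ => 0%N].
Definition mi_unit (i : 'I_n) : mi n := [ffun j => nat_of_bool (j == i)].

Definition ps0 : ps R n := fun _ => 0.
Definition psC (c : R) : ps R n := fun a => if a == mi0 then c else 0.
Definition ps1 : ps R n := psC 1.
Definition psX (i : 'I_n) : ps R n := fun a => if a == mi_unit i then 1 else 0.

Definition psadd (f g : ps R n) : ps R n := fun a => f a + g a.

(* The ordinal bound
   (\sum_i alpha i).+1 is large enough to contain every beta <= alpha. *)
Definition psmul (f g : ps R n) : ps R n := fun a =>
  \sum_(b : {ffun 'I_n -> 'I_((\sum_i a i).+1)} | [forall i, (b i <= a i)%N])
     f [ffun i => nat_of_ord (b i)] * g [ffun i => (a i - b i)%N].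

Definition ps_unit (f : ps R n) : Prop := exists g, psmul f g = ps1 /\ psmul g f = ps1.

Definition pssum (fs : seq (ps R n)) : ps R n := foldr psadd ps0 fs.

Definition in_ideal (gs : seq (ps R n)) (f : ps R n) : Prop :=
  exists hs : seq (ps R n), size hs = size gs /\
    f = pssum [seq psmul p.1 p.2 | p <- zip hs gs].

(* generators of I^3 when I is generated by gs: all triple products *)
Definition cube_gens (gs : seq (ps R n)) : seq (ps R n) :=
  flatten [seq [seq psmul (psmul g1 g2) g3 | g2 <- gs, g3 <- gs] | g1 <- gs].

Definition sumsq (gs : seq (ps R n)) : ps R n := pssum [seq psmul g g | g <- gs].
End PS.

(* In B = k[[x_0,...,x_d]] (d.+1 variables, x_0 has index 0): *)
Definition all_vars (R : nzRingType) (d : nat) : seq (ps R d.+1) :=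
  [seq psX R (inord i : 'I_d.+1) | i <- iota 0 d.+1].
Definition xs_vars (R : nzRingType) (d : nat) : seq (ps R d.+1) :=
  [seq psX R (inord i : 'I_d.+1) | i <- iota 1 d].

(* Sorting each generator x_i x_j x_l of m_B^3 by how many of its factors are
   x_0 writes G = x_0^2 p + x_0 q + r with p(0) = 0, q in I^2 and r in I^3,
   where I = (x_1, ..., x_d).  Then F = v_0 x_0^2 + q x_0 + x_1^2 + ... + x_d^2 + r
   with the unit v_0 = 1 + p, and completing the square with a_0 = q / (2 v_0)
   leaves G_1 = r - v_0 a_0^2 = r - q^2 / (4 v_0), which lies in I^4, inside I^3. *)

From HB Require Import structures.
From mathcomp Require Import all_boot all_order all_algebra.
From mathcomp Require Import boolp.
From mathcomp Require Import ring zify.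
Set Implicit Arguments. Unset Strict Implicit. Unset Printing Implicit Defensive.
Import GRing.Theory.
Local Open Scope ring_scope.

Lemma mulr_geom (S : pzRingType) (v : S) N :
  v * \sum_(i < N) (1 - v) ^+ i = 1 - (1 - v) ^+ N.
Proof.
have xm1 : 1 - v - 1 = - v by rewrite addrAC subrr add0r.
by rewrite -{1}[v]opprK -{1}xm1 mulNr -subrX1 opprB.
Qed.

Lemma complete_square (S : comPzRingType) (v u h y q : S) :
  v * u = 1 -> h * 2%:R = 1 ->
  v * y ^+ 2 + q * y = v * (y + q * u * h) ^+ 2 - v * (q * u * h) ^+ 2.
Proof.
move=> vu1 h2; have -> : v * (y + q * u * h) ^+ 2 - v * (q * u * h) ^+ 2 =
    v * y ^+ 2 + (v * u) * (h * 2%:R) * q * y by ring.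
by rewrite vu1 h2 !mul1r.
Qed.

Section MultiIndex.
Variable n : nat.
Implicit Types a b c e : mi n.

Definition mle b a := [forall i, (b i <= a i)%N].
Definition madd b c : mi n := [ffun i => (b i + c i)%N].
Definition msub b c : mi n := [ffun i => (b i - c i)%N].
Definition mdeg a := (\sum_i a i)%N.

(* The multi-indices b <= a, enumerated as in the definition of [psmul]. *)
Definition below a : seq (mi n) :=
  [seq [ffun i => nat_of_ord (x i)] | x : {ffun 'I_n -> 'I_(mdeg a).+1}
     <- enum [pred y : {ffun 'I_n -> 'I_(mdeg a).+1} | [forall i, (y i <= a i)%N]]].

Lemma mleP b a : reflect (forall i, (b i <= a i)%N) (mle b a).
Proof. exact: forallP. Qed.

Lemma mem_below a b : (b \in below a) = mle b a.
Proof.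
apply/mapP/mleP => [[b']|le_ba].
  by rewrite mem_enum inE => /forallP le_b'a -> i; rewrite ffunE.
have lt_b i : (b i < (mdeg a).+1)%N.
  by rewrite ltnS (leq_trans (le_ba i)) // /mdeg (bigD1 i) //= leq_addr.
exists [ffun i => Ordinal (lt_b i)].
  by rewrite mem_enum inE; apply/forallP => i; rewrite ffunE /= le_ba.
by apply/ffunP => i; rewrite !ffunE.
Qed.

Lemma below_uniq a : uniq (below a).
Proof.
rewrite map_inj_uniq ?enum_uniq // => b b' /ffunP eq_bb'; apply/ffunP => i.
by apply: val_inj; have := eq_bb' i; rewrite !ffunE.
Qed.

Lemma perm_below (s : seq (mi n)) a :
  uniq s -> (forall c, (c \in s) = mle c a) -> perm_eq s (below a).
Proof.
move=> uniq_s mem_s; apply: uniq_perm uniq_s (below_uniq a) _ => c.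
by rewrite mem_s mem_below.
Qed.

Lemma mle_trans a b c : mle a b -> mle b c -> mle a c.
Proof. by move=> /mleP le_ab /mleP le_bc; apply/mleP => i; apply: leq_trans (le_bc i). Qed.

Lemma mle0 a : mle (mi0 n) a.
Proof. by apply/mleP => i; rewrite ffunE. Qed.

Lemma msub0 a : msub a (mi0 n) = a.
Proof. by apply/ffunP => i; rewrite !ffunE subn0. Qed.

Lemma msubK a b : mle b a -> msub a (msub a b) = b.
Proof. by move=> /mleP le_ba; apply/ffunP => i; rewrite !ffunE subKn. Qed.

Lemma msub_le a b : mle (msub a b) a.
Proof. by apply/mleP => i; rewrite ffunE leq_subr. Qed.

Lemma madd_inj c : injective (madd c).
Proof.
move=> x y /ffunP eq_xy; apply/ffunP => i; apply/(@addnI (c i)).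
by have := eq_xy i; rewrite !ffunE.
Qed.

Lemma maddK c e : msub (madd c e) c = e.
Proof. by apply/ffunP => i; rewrite !ffunE addKn. Qed.

Lemma msubDA a c e : msub a (madd c e) = msub (msub a c) e.
Proof. by apply/ffunP => i; rewrite !ffunE subnDA. Qed.

Lemma msubKC c b : mle c b -> madd c (msub b c) = b.
Proof. by move=> /mleP le_cb; apply/ffunP => i; rewrite !ffunE subnKC. Qed.

Lemma mdeg_sub a b : mle b a -> mdeg (msub a b) = (mdeg a - mdeg b)%N.
Proof.
by move=> /mleP le_ba; rewrite /mdeg -sumnB //; apply: eq_bigr => i _; rewrite ffunE.
Qed.

Lemma mdeg_le a b : mle b a -> (mdeg b <= mdeg a)%N.
Proof. by move=> /mleP le_ba; apply: leq_sum => i _. Qed.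

Lemma mdeg_eq0 b : (mdeg b == 0%N) = (b == mi0 n).
Proof.
rewrite /mdeg sum_nat_eq0; apply/forallP/eqP => [b0|-> i]; last by rewrite ffunE.
by apply/ffunP => i; rewrite ffunE; apply/eqP/b0.
Qed.

Lemma below_shift a c : mle c a ->
  perm_eq [seq madd c e | e <- below (msub a c)] [seq b <- below a | mle c b].
Proof.
move=> /mleP le_ca; apply: uniq_perm.
- by rewrite map_inj_uniq ?below_uniq //; apply: madd_inj.
- by rewrite filter_uniq // below_uniq.
move=> b; rewrite mem_filter mem_below.
apply/mapP/andP => [[e]|[/mleP le_cb /mleP le_ba]].
  rewrite mem_below => /mleP le_e ->; split; apply/mleP => i; rewrite ffunE ?leq_addr //.
  by have := le_e i; have := le_ca i; rewrite ffunE; lia.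
exists (msub b c); last by rewrite msubKC //; apply/mleP.
by rewrite mem_below; apply/mleP => i; rewrite !ffunE leq_sub2r.
Qed.
End MultiIndex.

Section SeriesRing.
Variables (R : comNzRingType) (n : nat).
Implicit Types (f g h : ps R n) (a b c e : mi n).

Lemma coef_psmul f g a : psmul f g a = \sum_(b <- below a) f b * g (msub a b).
Proof.
rewrite /psmul /below big_map big_enum /=.
apply: eq_big => [x|x _]; first by rewrite inE.
by congr (_ * g _); apply/ffunP => i; rewrite !ffunE.
Qed.

Lemma psmulC f g : psmul f g = psmul g f.
Proof.
apply/funext => a; rewrite !coef_psmul.
have perm_sub : perm_eq [seq msub a b | b <- below a] (below a).
  apply: perm_below => [|c].
    rewrite map_inj_in_uniq ?below_uniq // => x y; rewrite !mem_below => le_xa le_ya eq_xy.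
    by rewrite -(msubK le_xa) eq_xy msubK.
  apply/mapP/idP => [[b _ ->]|le_ca]; first exact: msub_le.
  by exists (msub a c); rewrite ?mem_below ?msub_le ?msubK.
rewrite -(perm_big _ perm_sub) big_map; apply: eq_big_seq => b.
by rewrite mem_below => le_ba; rewrite msubK // mulrC.
Qed.

Lemma psCmul (x : R) f : psmul (psC x) f = fun a => x * f a.
Proof.
apply/funext => a; rewrite coef_psmul (bigD1_seq (mi0 n)) ?mem_below ?mle0 ?below_uniq //=.
rewrite big1 => [|b /negbTE nz_b]; first by rewrite /psC eqxx msub0 addr0.
by rewrite /psC nz_b mul0r.
Qed.

Lemma psmulDl f g h : psmul (psadd f g) h = psadd (psmul f h) (psmul g h).
Proof.
apply/funext => a; rewrite /psadd !coef_psmul -big_split.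
by apply: eq_bigr => b _; rewrite mulrDl.
Qed.

(* Both sides equal the sum over c <= b <= a of f_c g_(b-c) h_(a-b). *)
Lemma psmulA f g h : psmul f (psmul g h) = psmul (psmul f g) h.
Proof.
apply/funext => a; rewrite !coef_psmul.
transitivity (\sum_(c <- below a) \sum_(b <- below a)
   (if mle c b then f c * g (msub b c) * h (msub a b) else 0)).
  apply: eq_big_seq => c; rewrite mem_below => le_ca.
  rewrite coef_psmul big_distrr -[RHS]big_mkcond -[RHS]big_filter.
  rewrite -(perm_big _ (below_shift le_ca)) [RHS]big_map.
  by apply: eq_bigr => e _; rewrite /= maddK -msubDA mulrA.
rewrite exchange_big; apply: eq_big_seq => b; rewrite mem_below => le_ba.
rewrite coef_psmul big_distrl -big_mkcond -big_filter; apply: perm_big.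
apply: perm_below => [|c]; first by rewrite filter_uniq // below_uniq.
rewrite mem_filter mem_below andb_idr // => /mle_trans; exact.
Qed.
End SeriesRing.

Definition pseries (R : comNzRingType) n := ps R n.

Section PowerSeriesRing.
Variables (R : comNzRingType) (n : nat).
Local Notation PS := (pseries R n).
Implicit Types (f g h : PS).

HB.instance Definition _ := Choice.on PS.

Definition psopp f : PS := fun a => - f a.

Lemma psaddA : associative (@psadd R n : PS -> PS -> PS).
Proof. by move=> f g h; apply/funext => a; rewrite /psadd addrA. Qed.
Lemma psaddC : commutative (@psadd R n : PS -> PS -> PS).
Proof. by move=> f g; apply/funext => a; rewrite /psadd addrC. Qed.
Lemma ps0add : left_id (@ps0 R n : PS) (@psadd R n).
Proof. by move=> f; apply/funext => a; rewrite /psadd /ps0 add0r. Qed.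
Lemma psaddNl : left_inverse (@ps0 R n : PS) psopp (@psadd R n).
Proof. by move=> f; apply/funext => a; rewrite /psadd /ps0 /psopp addNr. Qed.

HB.instance Definition _ := GRing.isZmodule.Build PS psaddA psaddC ps0add psaddNl.

Lemma ps1mul : left_id (@ps1 R n : PS) (@psmul R n).
Proof. by move=> f; rewrite /ps1 psCmul; apply/funext => a; rewrite mul1r. Qed.

Lemma ps1_neq0 : (@ps1 R n : PS) != 0.
Proof.
apply/eqP => /(congr1 (fun f => f (mi0 n))).
by rewrite /ps1 /psC eqxx; apply/eqP/oner_neq0.
Qed.

HB.instance Definition _ := GRing.Zmodule_isComNzRing.Build PS
  (@psmulA R n) (@psmulC R n) ps1mul (@psmulDl R n) ps1_neq0.

Lemma psaddE f g : psadd f g = f + g. Proof. by []. Qed.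
Lemma psmulE f g : psmul f g = f * g. Proof. by []. Qed.

Lemma ps_coefD f g a : (f + g) a = f a + g a. Proof. by []. Qed.
Lemma ps_coefB f g a : (f - g) a = f a - g a. Proof. by []. Qed.

Lemma ps_coefM f g a : (f * g) a = \sum_(b <- below a) f b * g (msub a b).
Proof. exact: coef_psmul. Qed.

Definition ps_coef0 f : R := f (mi0 n).

Lemma ps_coef0M f g : ps_coef0 (f * g) = ps_coef0 f * ps_coef0 g.
Proof.
rewrite /ps_coef0 ps_coefM (bigD1_seq (mi0 n)) ?mem_below ?mle0 ?below_uniq //= msub0.
rewrite big1_seq ?addr0 // => b /andP[nz_b]; rewrite mem_below => /mdeg_le.
have /eqP -> : mdeg (mi0 n) == 0%N by rewrite mdeg_eq0.
by rewrite leqn0 mdeg_eq0 (negbTE nz_b).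
Qed.

Lemma ps_coef0_is_nmod_morphism : nmod_morphism ps_coef0.
Proof. by []. Qed.
Lemma ps_coef0_is_monoid_morphism : monoid_morphism ps_coef0.
Proof.
by split=> [|f g]; rewrite ?ps_coef0M // /ps_coef0 -[1]/(@ps1 R n) /ps1 /psC eqxx.
Qed.

HB.instance Definition _ :=
  GRing.isNmodMorphism.Build PS R ps_coef0 ps_coef0_is_nmod_morphism.
HB.instance Definition _ :=
  GRing.isMonoidMorphism.Build PS R ps_coef0 ps_coef0_is_monoid_morphism.

Lemma ps_coef_expr_eq0 f N a : ps_coef0 f = 0 -> (mdeg a < N)%N -> (f ^+ N) a = 0.
Proof.
move=> f0; elim: N a => [//|N IHN] a lt_aN.
rewrite exprS ps_coefM big1_seq // => b /andP[_]; rewrite mem_below => le_ba.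
have [->|nz_b] := eqVneq b (mi0 n); first by rewrite -/(ps_coef0 f) f0 mul0r.
rewrite IHN ?mulr0 // mdeg_sub //.
have := mdeg_le le_ba; rewrite -mdeg_eq0 in nz_b; move: nz_b lt_aN; lia.
Qed.

Definition psgeom (w : PS) N : PS := \sum_(i < N) w ^+ i.

Lemma psgeom_coef_stable w N b : ps_coef0 w = 0 -> (mdeg b < N)%N ->
  psgeom w N b = psgeom w (mdeg b).+1 b.
Proof.
move=> w0; elim: N => [//|N IHN]; rewrite ltnS leq_eqVlt => /predU1P[->//|lt_bN].
by rewrite /psgeom big_ord_recr /= ps_coefD ps_coef_expr_eq0 ?addr0 //; apply: IHN.
Qed.

(* The inverse is the geometric series in [1 - v]; its coefficient at [a] is
   already that of the partial sum of length [mdeg a + 1]. *)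
Lemma ps_invertible v : ps_coef0 v = 1 -> exists u : PS, v * u = 1.
Proof.
move=> v1; have w0 : ps_coef0 (1 - v) = 0 by rewrite rmorphB rmorph1 /= v1 subrr.
exists (fun a => psgeom (1 - v) (mdeg a).+1 a); apply/funext => a.
transitivity ((v * psgeom (1 - v) (mdeg a).+1) a).
  rewrite !ps_coefM; apply: eq_big_seq => b; rewrite mem_below => le_ba.
  by congr (_ * _); symmetry; apply: psgeom_coef_stable; rewrite // ltnS mdeg_le // msub_le.
by rewrite mulr_geom ps_coefB ps_coef_expr_eq0 ?subr0.
Qed.
End PowerSeriesRing.

Lemma psC_half (k : fieldType) n : (2%:R : k) != 0 ->
  (psC (2%:R^-1 : k) : pseries k n) * 2%:R = 1.
Proof.
move=> h2; rewrite -[_ * _]/(psmul _ _) psCmul; apply/funext => a.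
by rewrite -[(2%:R : pseries k n) a]/((1 + 1 : pseries k n) a) ps_coefD; field.
Qed.

Section Ideals.
Variables (R : comNzRingType) (n : nat).
Local Notation PS := (pseries R n).
Implicit Types (a b c f g h t : PS) (gs : seq PS).

Lemma in_ideal_nil f : in_ideal [::] f <-> f = 0.
Proof.
split=> [[hs [size_hs ->]]|->]; last by exists [::].
by case: hs size_hs.
Qed.

Lemma in_ideal_cons g gs f :
  in_ideal (g :: gs) f <-> exists h f', in_ideal gs f' /\ f = h * g + f'.
Proof.
split=> [[hs [size_hs ->]]|[h [f' [[hs [size_hs ->]] ->]]]].
  case: hs size_hs => [//|h hs [size_hs]].
  by exists h, (pssum [seq psmul p.1 p.2 | p <- zip hs gs]); split=> //; exists hs.
by exists (h :: hs); rewrite /= size_hs.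
Qed.

Lemma in_ideal0 gs : in_ideal gs (0 : PS).
Proof.
elim: gs => [|g gs IHgs]; first exact/in_ideal_nil.
by apply/in_ideal_cons; exists 0, 0; rewrite mul0r addr0.
Qed.

Lemma in_idealD gs f g : in_ideal gs f -> in_ideal gs g -> in_ideal gs (f + g).
Proof.
elim: gs f g => [|x gs IHgs] f g.
  by move=> /in_ideal_nil -> /in_ideal_nil ->; rewrite addr0; apply/in_ideal_nil.
move=> /in_ideal_cons [h [f' [If' ->]]] /in_ideal_cons [h' [g' [Ig' ->]]].
apply/in_ideal_cons; exists (h + h'), (f' + g'); split; first exact: IHgs.
by rewrite mulrDl addrACA.
Qed.

Lemma in_idealMl gs t f : in_ideal gs f -> in_ideal gs (t * f).
Proof.
elim: gs f => [|x gs IHgs] f.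
  by move=> /in_ideal_nil ->; rewrite mulr0; apply/in_ideal_nil.
move=> /in_ideal_cons [h [f' [If' ->]]]; apply/in_ideal_cons.
by exists (t * h), (t * f'); split; [apply: IHgs | rewrite mulrDr mulrA].
Qed.

Lemma in_idealB gs f g : in_ideal gs f -> in_ideal gs g -> in_ideal gs (f - g).
Proof. by move=> If Ig; rewrite -mulN1r; apply/in_idealD/in_idealMl. Qed.

Lemma in_ideal_gen gs g : g \in gs -> in_ideal gs g.
Proof.
elim: gs => [//|x gs IHgs]; rewrite in_cons => /predU1P[->|g_gs]; apply/in_ideal_cons.
  by exists 1, 0; rewrite mul1r addr0; split; first exact: in_ideal0.
by exists 0, g; rewrite mul0r add0r; split; first exact: IHgs.
Qed.

Lemma in_ideal_ind gs (P : PS -> Prop) :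
  P 0 -> (forall f g, P f -> P g -> P (f + g)) ->
  (forall h g, g \in gs -> P (h * g)) -> forall f, in_ideal gs f -> P f.
Proof.
move=> P0 PD; elim: gs => [|x gs IHgs] PM f; first by move=> /in_ideal_nil ->.
move=> /in_ideal_cons [h [f' [If' ->]]]; apply: PD; first by apply: PM; rewrite mem_head.
by apply: IHgs If' => h' g g_gs; apply: PM; rewrite in_cons g_gs orbT.
Qed.

Lemma in_ideal_mulr gs hs t f : (forall g, g \in gs -> in_ideal hs (g * t)) ->
  in_ideal gs f -> in_ideal hs (f * t).
Proof.
move=> gen_t.
apply: (in_ideal_ind (P := fun f => in_ideal hs (f * t))) => [|f1 f2 If1 If2|h g g_gs].
- by rewrite mul0r; apply: in_ideal0.
- by rewrite mulrDl; apply: in_idealD.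
by rewrite -mulrA; apply/in_idealMl/gen_t.
Qed.

Lemma cube_gensP gs f : reflect
  (exists g1 g2 g3, [/\ g1 \in gs, g2 \in gs, g3 \in gs & f = g1 * g2 * g3])
  (f \in cube_gens gs).
Proof.
apply: (iffP flattenP) => [[s /mapP[g1 g1_gs ->]]|[g1 [g2 [g3 [g1_gs g2_gs g3_gs ->]]]]].
  by move=> /allpairsP[[g2 g3] [/= g2_gs g3_gs ->]]; exists g1, g2, g3.
exists [seq psmul (psmul g1 x) y | x <- gs, y <- gs]; first exact: map_f.
by apply/allpairsP; exists (g2, g3).
Qed.

Lemma in_ideal_cube gs a b c : in_ideal gs a -> in_ideal gs b -> in_ideal gs c ->
  in_ideal (cube_gens gs) (a * b * c).
Proof.
move=> Ia Ib Ic; rewrite -mulrA; apply: in_ideal_mulr Ia => g1 g1_gs.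
rewrite mulrCA; apply: in_ideal_mulr Ib => g2 g2_gs.
rewrite mulrA mulrC; apply: in_ideal_mulr Ic => g3 g3_gs.
by rewrite mulrC; apply/in_ideal_gen/cube_gensP; exists g2, g1, g3.
Qed.
End Ideals.

Section SplitOffX0.
Variables (R : comNzRingType) (d : nat).
Local Notation PS := (pseries R d.+1).
Local Notation X0 := (psX R ord0 : PS).
Local Notation I1 := (in_ideal (xs_vars R d)).
Local Notation I3 := (in_ideal (cube_gens (xs_vars R d))).
Implicit Types (f g h p q r y : PS).

Lemma all_varsE : all_vars R d = psX R ord0 :: xs_vars R d.
Proof.
by rewrite /all_vars /=; congr (psX R _ :: _); apply: val_inj; rewrite /= inordK.
Qed.

Lemma ps_coef0_psX (i : 'I_d.+1) : ps_coef0 (psX R i : PS) = 0.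
Proof. by rewrite /ps_coef0 /psX; case: eqP => // /ffunP/(_ i); rewrite !ffunE eqxx. Qed.

Lemma all_vars_split g : g \in all_vars R d ->
  exists e y, [/\ g = X0 * e + y, ps_coef0 y = 0 & I1 y].
Proof.
rewrite all_varsE in_cons => /predU1P[->|g_xs].
  by exists 1, 0; rewrite mulr1 addr0 rmorph0; split=> //; apply: in_ideal0.
exists 0, g; rewrite mulr0 add0r; split=> //; last exact: in_ideal_gen.
by move: g_xs => /mapP[i _ ->]; apply: ps_coef0_psX.
Qed.

(* Stands in for membership in I^2: it holds on I^2 and puts [q * q] in I^3. *)
Definition quadratic q := I1 q /\ forall c, I1 c -> I3 (q * c).

Lemma quadratic0 : quadratic 0.
Proof. by split=> [|c _]; rewrite ?mul0r; apply: in_ideal0. Qed.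

Lemma quadraticD q q' : quadratic q -> quadratic q' -> quadratic (q + q').
Proof.
move=> [Iq qI] [Iq' q'I]; split=> [|c Ic]; first exact: in_idealD.
by rewrite mulrDl; apply: in_idealD; [apply: qI | apply: q'I].
Qed.

Lemma quadraticM h y z : I1 y -> I1 z -> quadratic (h * y * z).
Proof.
move=> Iy Iz; split=> [|c Ic]; first exact: in_idealMl.
by rewrite -!mulrA; apply: in_idealMl; rewrite !mulrA; apply: in_ideal_cube.
Qed.

Definition x0_split f := exists p q r,
  [/\ f = X0 ^+ 2 * p + X0 * q + r, ps_coef0 p = 0, quadratic q & I3 r].

Lemma x0_split0 : x0_split 0.
Proof.
exists 0, 0, 0; rewrite !mulr0 !addr0 rmorph0.
by split=> //; [exact: quadratic0 | exact: in_ideal0].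
Qed.

Lemma x0_splitD f g : x0_split f -> x0_split g -> x0_split (f + g).
Proof.
move=> [p [q [r [-> p0 Qq Ir]]]] [p' [q' [r' [-> p'0 Qq' Ir']]]].
exists (p + p'), (q + q'), (r + r'); split.
- by ring.
- by rewrite rmorphD /= p0 p'0 addr0.
- exact: quadraticD.
exact: in_idealD.
Qed.

Lemma x0_split_gen h g : g \in cube_gens (all_vars R d) -> x0_split (h * g).
Proof.
move=> /cube_gensP[g1 [g2 [g3 [/all_vars_split[e1 [y1 [-> y10 Iy1]]]
  /all_vars_split[e2 [y2 [-> y20 Iy2]]] /all_vars_split[e3 [y3 [-> y30 Iy3]]] ->]]]].
(* Expand (X0 e1 + y1) (X0 e2 + y2) (X0 e3 + y3) by powers of X0. *)
exists (h * (X0 * e1 * e2 * e3 + e1 * e2 * y3 + e1 * y2 * e3 + y1 * e2 * e3)),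
  (h * e1 * y2 * y3 + h * e2 * y1 * y3 + h * e3 * y1 * y2), (h * (y1 * y2 * y3)); split.
- by ring.
- by rewrite !(rmorphD, rmorphM) /= ps_coef0_psX y10 y20 y30 !(mulr0, mul0r, addr0).
- by apply: quadraticD; [apply: quadraticD|]; apply: quadraticM.
by apply/in_idealMl/in_ideal_cube.
Qed.

Lemma x0_split_cube f : in_ideal (cube_gens (all_vars R d)) f -> x0_split f.
Proof. exact: (in_ideal_ind x0_split0 x0_splitD x0_split_gen). Qed.
End SplitOffX0.

Theorem lemma3p1 (k : fieldType) (d : nat) (h2 : (2%:R : k) != 0)
  (G : ps k d.+1) (hG : in_ideal (cube_gens (all_vars k d)) G) :
  exists (v0 a0 G1 : ps k d.+1),
    ps_unit v0 /\
    in_ideal (xs_vars k d) a0 /\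
    in_ideal (cube_gens (xs_vars k d)) G1 /\
    psadd (sumsq (all_vars k d)) G
    = psadd (psmul v0 (psmul (psadd (psX k ord0) a0) (psadd (psX k ord0) a0)))
            (psadd (sumsq (xs_vars k d)) G1).
Proof.
have [p [q [r [EG p0 [Iq qI] Ir]]]] := x0_split_cube hG.
have [u pu] : exists u, (1 + p) * u = 1.
  by apply: ps_invertible; rewrite rmorphD rmorph1 /= p0 addr0.
pose half : pseries k d.+1 := psC 2%:R^-1.
have half2 : half * 2%:R = 1 by exact: psC_half.
exists (1 + p), (q * u * half), (r - (1 + p) * (q * u * half) ^+ 2).
split; first by exists u; rewrite !psmulE [u * _]mulrC pu.
split; first by rewrite -mulrA mulrC; apply: in_idealMl.
split.
  apply: in_idealB => //.
  have -> : (1 + p) * (q * u * half) ^+ 2 = (1 + p) * (u * half) ^+ 2 * (q * q) by ring.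
  exact/in_idealMl/qI.
rewrite /sumsq all_varsE /= -/(sumsq _) EG !psaddE !psmulE.
set X0 : pseries k d.+1 := psX k ord0; set S : pseries k d.+1 := sumsq _.
apply: (@eq_trans (pseries k d.+1) _ ((1 + p) * X0 ^+ 2 + q * X0 + (S + r))); first by ring.
by rewrite (complete_square _ _ pu half2); ring.
Qed.
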